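(* Let $\emptyset\neq S\subseteq\{1,\dots,n\}$. Then $\nabla\Phi(\mathbf{x}(S))\,\mathbf{d}\le 0$ for all $\mathbf{d}\in\mathcal{F}(\mathbf{x}(S))$. Moreover, if $\nabla^2\Phi(\tilde{\mathbf{x}})$ is positive definite for every $\tilde{\mathbf{x}}\in\Delta$, then $\nabla\Phi(\mathbf{x}(S))\,\mathbf{d}<0$ for every $\mathbf{d}\in\mathcal{F}(\mathbf{x}(S))$ with $\mathrm{supp}(\mathbf{d})\not\subseteq S$.
   Context: Let $\Delta=\{\mathbf{x}\in\mathbb{R}^n:\mathbf{0}\le\mathbf{x}\le\mathbf{1},\ \mathbf{1}^{\mathsf T}\mathbf{x}=1\}$ and $\mathrm{supp}(\mathbf{x})=\{i:x_i\neq0\}$. For non-empty $S\subseteq\{1,\dots,n\}$, $\mathbf{x}(S)\in\Delta$ has $x(S)_i=1/|S|$ for $i\in S$ and $0$ otherwise. For $\mathbf{x}\in\Delta$, $\mathcal{F}(\mathbf{x})=\{\mathbf{d}\in\mathbb{R}^n:\mathbf{1}^{\mathsf T}\mathbf{d}=0,\ d_i\ge0\text{ whenever }x_i=0\}$, and $\mathcal{P}(\mathbf{x})$ is the set of vectors in $\Delta$ obtained by permuting the coordinates of $\mathbf{x}$. Let $\Phi:X\to\mathbb{R}$ be twice continuously differentiable on an open set $X\supset\Delta$, satisfying for every $\mathbf{x}\in\Delta$: (C1) $\nabla^2\Phi(\mathbf{x})$ is positive semidefinite; (C2) $\|\nabla^2\Phi(\mathbf{x})\|_2<2$ (spectral norm);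 (C3) $\Phi$ is constant on $\mathcal{P}(\mathbf{x})$. The gradient $\nabla\Phi(\mathbf{x})$ is a row vector. *)

From HB Require Import structures.
From mathcomp Require Import all_boot all_order all_algebra all_fingroup.
From mathcomp Require Import all_classical all_reals all_analysis.
Set Implicit Arguments. Unset Strict Implicit. Unset Printing Implicit Defensive.
Import Order.TTheory GRing.Theory Num.Theory.
Import numFieldNormedType.Exports.
Local Open Scope classical_set_scope.
Local Open Scope ring_scope.

Section Defs.
Variables (R : realType) (n : nat).

Definition ebasis (i : 'I_n) : 'rV[R]_n := delta_mx 0 i.

Definition partial (i : 'I_n) (f : 'rV[R]_n -> R) : 'rV[R]_n -> R :=
  fun x => 'D_(ebasis i) f x.

Definition grad (f : 'rV[R]_n -> R) (x : 'rV[R]_n) : 'rV[R]_n :=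
  \row_i partial i f x.

Definition hessian (f : 'rV[R]_n -> R) (x : 'rV[R]_n) : 'M[R]_n :=
  \matrix_(i, j) partial j (partial i f) x.

Definition C2_on (X : set 'rV[R]_n) (f : 'rV[R]_n -> R) : Prop :=
  [/\ forall x, X x -> differentiable f x,
      forall i x, X x -> differentiable (partial i f) x &
      forall i j, {in X, continuous (partial j (partial i f))}].

Definition simplex : set 'rV[R]_n :=
  [set x | (forall i, 0 <= x 0 i <= 1) /\ \sum_i x 0 i = 1].

Definition xS (S : {set 'I_n}) : 'rV[R]_n :=
  \row_i (if i \in S then (#|S|%:R)^-1 else 0).

Definition feasible (x : 'rV[R]_n) : set 'rV[R]_n :=
  [set d | \sum_i d 0 i = 0 /\ (forall i, x 0 i = 0 -> 0 <= d 0 i)].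

Definition supp (x : 'rV[R]_n) : {set 'I_n} := [set i | x 0 i != 0].

Definition permute (s : 'S_n) (x : 'rV[R]_n) : 'rV[R]_n := \row_i x 0 (s i).
Definition perms (x : 'rV[R]_n) : set 'rV[R]_n :=
  [set y | exists s : 'S_n, y = permute s x].

Definition qform (A : 'M[R]_n) (v : 'rV[R]_n) : R := (v *m A *m v^T) 0 0.

Definition psd (A : 'M[R]_n) : Prop := forall v, 0 <= qform A v.
Definition pd (A : 'M[R]_n) : Prop := forall v, v != 0 -> 0 < qform A v.

Definition sqnorm2 (v : 'rV[R]_n) : R := \sum_i v 0 i ^+ 2.

(* spectral norm ||A||_2 < c  (operator norm induced by the Euclidean norm,
   i.e. sup_{v<>0} ||v A^T||_2/||v||_2 < c, written as the existence of a
   bound c' < c) *)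
Definition spec_norm_lt (A : 'M[R]_n) (c : R) : Prop :=
  exists2 c', 0 <= c' < c &
    forall v : 'rV[R]_n, sqnorm2 (v *m A^T) <= c' ^+ 2 * sqnorm2 v.

Definition dirder (g d : 'rV[R]_n) : R := \sum_i g 0 i * d 0 i.

End Defs.
Arguments simplex {R n}.

(* Write x = x(S), T = 1/|S| and fix i in S; everything comes from the
   permutation invariance (C3).  For k in S the transposition (k i) fixes x and
   exchanges x + h(e_k - e_i) with x - h(e_k - e_i), so Phi is even along that
   line and d_k Phi(x) = d_i Phi(x).  For j outside S the transposition (i j)
   maps x to x + T(e_j - e_i), so Phi takes equal values at both ends of this
   segment of the simplex; Rolle and the mean value theorem applied to
   s |-> Phi(x + s(e_j - e_i)) give
     d_j Phi(x) - d_i Phi(x) = - c (e_j - e_i) Hess Phi(y) (e_j - e_i)^T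
   with c > 0 and y in the simplex, which is <= 0 by (C1), and < 0 when the
   Hessian is positive definite.  Finally a feasible d sums to 0 and is
   nonnegative off S, so grad Phi(x) d = sum_(j notin S) (d_j Phi(x) - d_i Phi(x)) d_j. *)

From HB Require Import structures.
From mathcomp Require Import all_boot all_order all_algebra all_fingroup.
From mathcomp Require Import all_classical all_reals all_analysis lra.
Set Implicit Arguments. Unset Strict Implicit. Unset Printing Implicit Defensive.
Import Order.TTheory GRing.Theory Num.Theory.
Import numFieldNormedType.Exports.
Local Open Scope classical_set_scope.
Local Open Scope ring_scope.

Section LineCalculus.
Variables (R : realType) (n : nat).
Implicit Types (f : 'rV[R]_n -> R) (x v w : 'rV[R]_n).

Lemma derive_partialE f x v : differentiable f x ->
  'D_v f x = \sum_i v 0 i * partial i f x.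
Proof.
move=> df; rewrite deriveE // {1}(row_sum_delta v) linear_sum.
by apply: eq_bigr => i _; rewrite linearZ /= /partial deriveE.
Qed.

Lemma dirder_gradE f x v : differentiable f x -> dirder (grad f x) v = 'D_v f x.
Proof.
move=> df; rewrite derive_partialE //.
by apply: eq_bigr => i _; rewrite mxE mulrC.
Qed.

Lemma qformE (A : 'M[R]_n) v :
  qform A v = \sum_k \sum_l v 0 k * A k l * v 0 l.
Proof.
rewrite /qform !mxE exchange_big; apply: eq_bigr => l _ /=.
by rewrite !mxE big_distrl; apply: eq_bigr.
Qed.

Lemma is_derive_line f x v t : differentiable f (t *: v + x) ->
  is_derive t 1 (fun s => f (s *: v + x)) ('D_v f (t *: v + x)).
Proof.
move=> df.
have quotE : (fun h : R => h^-1 *: (((fun s => f (s *: v + x)) \o shift t) (h *: 1)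
                                     - f (t *: v + x)))
           = (fun h => h^-1 *: ((f \o shift (t *: v + x)) (h *: v) - f (t *: v + x))).
  by apply: funext => h /=; rewrite /shift /= [h%:A]mulr1 scalerDl addrA.
apply: DeriveDef; last by rewrite /derive quotE.
by rewrite /derivable quotE; exact: diff_derivable.
Qed.

Lemma derive_eq0_of_even f x w (eps : R) : 0 < eps -> differentiable f x ->
  (forall h, 0 < h < eps -> f (h *: w + x) = f (h *: - w + x)) ->
  'D_w f x = 0.
Proof.
move=> eps0 df even.
have /cvg_dnbhs_at_right Dw := @diff_derivable _ _ _ f x w df.
have /cvg_dnbhs_at_right Dmw := @diff_derivable _ _ _ f x (- w) df.
have Dw_mw : 'D_w f x = 'D_(- w) f x.
  apply: (cvg_unique _ _ Dmw) => //; apply: cvg_trans Dw; apply: near_eq_cvg.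
  near=> h; rewrite /= /shift /= even //; apply/andP; split.
    by near: h; exact: nbhs_right_gt.
  by near: h; exact: nbhs_right_lt.
have : 'D_(- w) f x = - 'D_w f x by rewrite !deriveE // linearN.
by rewrite -Dw_mw; lra.
Unshelve. all: by end_near.
Qed.

End LineCalculus.

Lemma MVT2_equal_ends (R : realType) (h h' h'' : R -> R) (T : R) : 0 < T ->
  (forall s, 0 <= s <= T -> is_derive s 1 h (h' s)) ->
  (forall s, 0 <= s <= T -> is_derive s 1 h' (h'' s)) ->
  h T = h 0 ->
  exists2 s, 0 < s < T & exists2 c, 0 < c & h' 0 = - (c * h'' s).
Proof.
move=> T0 dh dh' hT.
have MVT_in (g g' : R -> R) b : 0 < b -> b <= T ->
    (forall s, 0 <= s <= T -> is_derive s 1 g (g' s)) ->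
    exists2 c, 0 < c < b & g b - g 0 = g' c * b.
  move=> b0 bT dg.
  have dg_in s : 0 <= s <= b -> is_derive s 1 g (g' s).
    by move=> /andP[s0 sb]; apply: dg; rewrite s0 (le_trans sb bT).
  have dg_open s : s \in `]0, b[ -> is_derive s 1 g (g' s).
    by rewrite in_itv /= => /andP[s0 sb]; apply: dg_in; rewrite !ltW.
  have g_cont : {within `[0, b], continuous g}.
    apply: derivable_within_continuous => s; rewrite in_itv /= => sb.
    by have [] := dg_in s sb.
  have [c] := MVT b0 dg_open g_cont.
  by rewrite in_itv /= subr0 => c0b ->; exists c.
have [c /andP[c0 cT] h'c] := MVT_in h h' T T0 (lexx T) dh.
have [s /andP[s0 sc] h's] := MVT_in h' h'' c c0 (ltW cT) dh'.
exists s; first by rewrite s0 (lt_trans sc cT).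
exists c => //.
move: h'c h's; rewrite hT subrr => /esym/eqP; rewrite mulf_eq0 (gt_eqF T0) orbF.
by move=> /eqP -> h's; rewrite mulrC -h's sub0r opprK.
Qed.

Section SecondOrderLine.
Variables (R : realType) (n : nat) (X : set 'rV[R]_n) (f : 'rV[R]_n -> R).
Hypothesis f_C2 : C2_on X f.
Variables (x v : 'rV[R]_n).

Lemma is_derive_line_value t : X (t *: v + x) ->
  is_derive t 1 (fun s => f (s *: v + x)) (dirder (grad f (t *: v + x)) v).
Proof.
case: f_C2 => df _ _ /df dft; rewrite dirder_gradE //.
exact: is_derive_line dft.
Qed.

Lemma is_derive_line_dirder t : X (t *: v + x) ->
  is_derive t 1 (fun s => dirder (grad f (s *: v + x)) v)
    (qform (hessian f (t *: v + x)) v).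
Proof.
case: f_C2 => _ ddf _ Xt.
pose g (k : 'I_n) s := v 0 k * partial k f (s *: v + x).
have -> : (fun s => dirder (grad f (s *: v + x)) v) = \sum_k g k.
  by apply: funext => s; rewrite fct_sumE; apply: eq_bigr => k _; rewrite mxE mulrC.
apply: is_derive_eq.
  by apply: is_derive_sum => k; apply: is_deriveZ; exact: is_derive_line (ddf k _ Xt).
rewrite qformE; apply: eq_bigr => k _; rewrite derive_partialE; last exact: ddf.
rewrite scaler_sumr; apply: eq_bigr => l _.
by rewrite mxE [in RHS]mulrAC -mulrA.
Qed.

Lemma dirder_eq_opp_qform (T : R) : 0 < T ->
  (forall s, 0 <= s <= T -> X (s *: v + x)) -> f (T *: v + x) = f x ->
  exists2 s, 0 < s < T & exists2 c, 0 < c &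
    dirder (grad f x) v = - (c * qform (hessian f (s *: v + x)) v).
Proof.
move=> T0 Xseg fT.
have [|s sT [c c0]] := MVT2_equal_ends T0
  (fun s hs => is_derive_line_value (Xseg s hs))
  (fun s hs => is_derive_line_dirder (Xseg s hs)).
  by rewrite scale0r add0r.
by rewrite scale0r add0r => dirderE; exists s => //; exists c.
Qed.

End SecondOrderLine.

Section Coordinates.
Variables (R : realType) (n : nat).
Implicit Types (a b k : 'I_n) (y g d : 'rV[R]_n).

Lemma ebasisB_neq0 a b : a != b -> ebasis R a - ebasis R b != 0.
Proof.
move=> ab; apply/eqP => /rowP/(_ a).
by rewrite !mxE /= eqxx (negbTE ab) subr0 => /eqP; rewrite oner_eq0.
Qed.

Lemma shift_ebasisBE y a b (s : R) k :
  (s *: (ebasis R a - ebasis R b) + y) 0 k = s * ((k == a)%:R - (k == b)%:R) + y 0 k.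
Proof. by rewrite !mxE. Qed.

Lemma dirder_ebasis g a : dirder g (ebasis R a) = g 0 a.
Proof.
rewrite /dirder (bigD1 a) //= big1 => [|k /negbTE ka]; rewrite !mxE /=.
  by rewrite eqxx mulr1 addr0.
by rewrite ka mulr0.
Qed.

Lemma dirderB g d d' : dirder g (d - d') = dirder g d - dirder g d'.
Proof. by rewrite /dirder -sumrB; apply: eq_bigr => k _; rewrite !mxE mulrBr. Qed.

Lemma dirder_ebasisB g a b : dirder g (ebasis R a - ebasis R b) = g 0 a - g 0 b.
Proof. by rewrite dirderB !dirder_ebasis. Qed.

Lemma sum_ebasis a : \sum_k ebasis R a 0 k = 1.
Proof.
rewrite (bigD1 a) //= big1 => [|k /negbTE ka]; rewrite mxE /=.
  by rewrite eqxx addr0.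
by rewrite ka.
Qed.

Lemma sum_ebasisB a b : \sum_k (ebasis R a - ebasis R b) 0 k = 0.
Proof.
have -> : \sum_k (ebasis R a - ebasis R b) 0 k
          = \sum_k ebasis R a 0 k - \sum_k ebasis R b 0 k.
  by rewrite -sumrB; apply: eq_bigr => k _; rewrite !mxE.
by rewrite !sum_ebasis subrr.
Qed.

Lemma dirder_shift g d (c : R) : \sum_k d 0 k = 0 ->
  dirder g d = \sum_k (g 0 k - c) * d 0 k.
Proof.
move=> d0; rewrite /dirder; under [RHS]eq_bigr do rewrite mulrBl.
by rewrite sumrB -mulr_sumr d0 mulr0 subr0.
Qed.

Lemma permute_tperm y a b :
  permute (tperm a b) y = (y 0 a - y 0 b) *: (ebasis R b - ebasis R a) + y.
Proof.
have [<-|ab] := eqVneq a b.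
  by apply/rowP => k; rewrite subrr scale0r add0r mxE tperm1 perm1.
apply/rowP => k; rewrite mxE shift_ebasisBE.
have [->|ka] := eqVneq k a.
  by rewrite tpermL (negbTE ab) sub0r mulrN1 opprB subrK.
have [->|kb] := eqVneq k b.
  by rewrite tpermR subr0 mulr1 subrK.
by rewrite tpermD 1?eq_sym // subrr mulr0 add0r.
Qed.

Lemma permute_tperm_shift y a b (s : R) : y 0 a = y 0 b ->
  permute (tperm a b) (s *: (ebasis R a - ebasis R b) + y)
  = s *: (ebasis R b - ebasis R a) + y.
Proof.
move=> yab; apply/rowP => k; rewrite mxE !shift_ebasisBE.
have [->|ka] := eqVneq k a; first by rewrite tpermL yab eqxx (eq_sym b a).
have [kb|kb] := eqVneq k b.
  by move: ka; rewrite kb tpermR -yab eqxx eq_sym => /negbTE ->.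
by rewrite tpermD ?(negbTE ka) ?(negbTE kb) ?subrr ?mulr0 // eq_sym.
Qed.

Lemma simplex_shift y a b (s : R) : simplex y -> a != b ->
  0 <= s <= y 0 b -> y 0 a + s <= 1 ->
  simplex (s *: (ebasis R a - ebasis R b) + y).
Proof.
move=> [y01 y1] ab /andP[s0 syb] yas; split => [k|].
  have /andP[ya0 _] := y01 a; have /andP[_ yb1] := y01 b.
  rewrite shift_ebasisBE; have [->|ka] := eqVneq k a.
    by rewrite (negbTE ab) /=; apply/andP; split; lra.
  have [->|kb] := eqVneq k b; first by rewrite /=; apply/andP; split; lra.
  by rewrite subrr mulr0 add0r y01.
have -> : \sum_k (s *: (ebasis R a - ebasis R b) + y) 0 k
          = s * \sum_k (ebasis R a - ebasis R b) 0 k + \sum_k y 0 k.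
  by rewrite mulr_sumr -big_split; apply: eq_bigr => k _; rewrite !mxE.
by rewrite sum_ebasisB mulr0 add0r.
Qed.

End Coordinates.

Section Barycenter.
Variables (R : realType) (n : nat) (S : {set 'I_n}).
Implicit Types (g d : 'rV[R]_n).

Lemma xS_in k : k \in S -> xS R S 0 k = #|S|%:R^-1.
Proof. by rewrite mxE => ->. Qed.

Lemma xS_out k : k \notin S -> xS R S 0 k = 0.
Proof. by rewrite mxE => /negbTE ->. Qed.

Lemma simplex_xS : S != finset.set0 -> simplex (xS R S).
Proof.
move=> /set0Pn[i iS]; have S_gt0 : (0 < #|S|)%N by apply/card_gt0P; exists i.
split => [k|].
  rewrite mxE; case: ifP => _; rewrite ?lexx ?ler01 // invr_ge0 ler0n.
  by rewrite invf_le1 ?ltr0n // ler1n.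
under eq_bigr do rewrite mxE.
by rewrite -big_mkcond /= sumr_const -[_ *+ _]mulr_natl mulfV // pnatr_eq0 -lt0n.
Qed.

Lemma feasible_xS_term_le0 g d i k : (forall k, k \in S -> g 0 k = g 0 i) ->
  (forall j, j \notin S -> g 0 j <= g 0 i) -> feasible (xS R S) d ->
  (g 0 k - g 0 i) * d 0 k <= 0.
Proof.
move=> gS gout [_ dpos]; have [kS|kS] := boolP (k \in S).
  by rewrite gS // subrr mul0r.
by rewrite mulr_le0_ge0 ?subr_le0 ?gout // dpos // xS_out.
Qed.

Lemma dirder_feasible_xS_le0 g d i :
  (forall k, k \in S -> g 0 k = g 0 i) ->
  (forall j, j \notin S -> g 0 j <= g 0 i) ->
  feasible (xS R S) d -> dirder g d <= 0.
Proof.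
move=> gS gout fd; rewrite (dirder_shift g (g 0 i) fd.1).
by apply: sumr_le0 => k _; exact: feasible_xS_term_le0.
Qed.

Lemma dirder_feasible_xS_lt0 g d i :
  (forall k, k \in S -> g 0 k = g 0 i) ->
  (forall j, j \notin S -> g 0 j < g 0 i) ->
  feasible (xS R S) d -> ~~ (supp d \subset S) -> dirder g d < 0.
Proof.
move=> gS gout fd /subsetPn[j]; rewrite inE => dj_neq0 jS.
have gout_le j' : j' \notin S -> g 0 j' <= g 0 i by move/gout/ltW.
have dj_gt0 : 0 < d 0 j by rewrite lt_def dj_neq0 fd.2 ?xS_out.
rewrite (dirder_shift g (g 0 i) fd.1) (bigD1 j) //=.
have rest_le0 : \sum_(k < n | k != j) (g 0 k - g 0 i) * d 0 k <= 0.
  by apply: sumr_le0 => k _; exact: feasible_xS_term_le0.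
have : (g 0 j - g 0 i) * d 0 j < 0 by rewrite pmulr_llt0 // subr_lt0 gout.
lra.
Qed.

End Barycenter.

Section SymmetricPotential.
Variables (R : realType) (n : nat) (X : set 'rV[R]_n) (Phi : 'rV[R]_n -> R).
Hypotheses (simplex_subX : simplex `<=` X) (Phi_C2 : C2_on X Phi).
Hypothesis Phi_perm : forall x s, simplex x -> Phi (permute s x) = Phi x.
Variables (S : {set 'I_n}) (i : 'I_n).
Hypothesis iS : i \in S.

Let T : R := #|S|%:R^-1.

Let S_gt0 : (0 < #|S|)%N.
Proof. by apply/card_gt0P; exists i. Qed.

Let T_gt0 : 0 < T.
Proof. by rewrite invr_gt0 ltr0n. Qed.

Let T_le1 : T <= 1.
Proof. by rewrite invf_le1 ?ltr0n // ler1n. Qed.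

Let simplex_x : simplex (xS R S).
Proof. by apply: simplex_xS; apply/set0Pn; exists i. Qed.

Lemma partial_xS_eq k : k \in S -> partial k Phi (xS R S) = partial i Phi (xS R S).
Proof.
move=> kS; have [->//|ki] := eqVneq k i.
have TT : T + T <= 1.
  have S_ge2 : (2 <= #|S|)%N by apply/card_gt1P; exists k, i.
  rewrite -mulr2n -mulr_natl ler_pdivrMr ?mul1r ?ler_nat //.
  by rewrite ltr0n (leq_trans _ S_ge2).
have dPhi : differentiable Phi (xS R S).
  by case: Phi_C2 => + _ _; apply; exact: simplex_subX.
have := dirder_ebasisB (grad Phi (xS R S)) k i.
rewrite dirder_gradE // (derive_eq0_of_even T_gt0 dPhi) => [|h /andP[h0 hT]].
  by rewrite !mxE => /eqP; rewrite eq_sym subr_eq0 => /eqP.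
have xki : xS R S 0 k = xS R S 0 i by rewrite !xS_in.
rewrite opprB -(permute_tperm_shift _ xki) Phi_perm //.
apply: simplex_shift => //; rewrite !xS_in // -/T; first by rewrite !ltW.
lra.
Qed.

Lemma partial_xS_out j : j \notin S ->
  exists2 y, simplex y & exists2 c, 0 < c &
    partial j Phi (xS R S) - partial i Phi (xS R S)
    = - (c * qform (hessian Phi y) (ebasis R j - ebasis R i)).
Proof.
move=> jS; have ji : j != i by apply: contraNneq jS => ->.
have seg s : 0 <= s <= T -> simplex (s *: (ebasis R j - ebasis R i) + xS R S).
  move=> /andP[s0 sT]; apply: simplex_shift => //; first by rewrite xS_in // s0.
  by rewrite xS_out // add0r (le_trans sT).
have Phi_end : Phi (T *: (ebasis R j - ebasis R i) + xS R S) = Phi (xS R S).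
  by rewrite -[RHS](Phi_perm (tperm i j) simplex_x) permute_tperm xS_in // xS_out // subr0.
have [s /andP[s0 sT] [c c0 dirderE]] :=
  dirder_eq_opp_qform Phi_C2 T_gt0 (fun s hs => simplex_subX (seg s hs)) Phi_end.
exists (s *: (ebasis R j - ebasis R i) + xS R S); first by apply: seg; rewrite !ltW.
by exists c => //; rewrite -dirderE dirder_ebasisB !mxE.
Qed.

End SymmetricPotential.

Theorem lemma4 (R : realType) (n : nat) (X : set 'rV[R]_n)
  (Phi : 'rV[R]_n -> R)
  (hXopen : open X) (hXsub : simplex `<=` X) (hC2 : C2_on X Phi)
  (hC1 : forall x, simplex x -> psd (hessian Phi x))
  (hC2norm : forall x, simplex x -> spec_norm_lt (hessian Phi x) 2)
  (hC3 : forall x, simplex x -> forall y, perms x y -> Phi y = Phi x)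
  (S : {set 'I_n}) (hS : S != finset.set0) :
  (forall d, feasible (xS R S) d -> dirder (grad Phi (xS R S)) d <= 0) /\
  ((forall x, simplex x -> pd (hessian Phi x)) ->
   forall d, feasible (xS R S) d -> ~~ (supp d \subset S) ->
     dirder (grad Phi (xS R S)) d < 0).
Proof.
have /set0Pn[i iS] := hS.
have Phi_perm x s : simplex x -> Phi (permute s x) = Phi x.
  by move=> /hC3; apply; exists s.
set g := grad Phi (xS R S).
have gS k : k \in S -> g 0 k = g 0 i.
  by move=> kS; rewrite !mxE (partial_xS_eq hXsub hC2 Phi_perm iS kS).
have gout j : j \notin S -> exists2 y, simplex y & exists2 c, 0 < c &
    g 0 j - g 0 i = - (c * qform (hessian Phi y) (ebasis R j - ebasis R i)).
  by move=> jS; rewrite !mxE; exact: (partial_xS_out hXsub hC2 Phi_perm iS jS).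
split => [d|Phi_pd d].
  apply: (dirder_feasible_xS_le0 gS) => j /gout[y /hC1 psd_y [c c0 gjiE]].
  have q_ge0 := psd_y (ebasis R j - ebasis R i).
  by rewrite -subr_le0 gjiE oppr_le0 (mulr_ge0 (ltW c0)).
apply: (dirder_feasible_xS_lt0 gS) => j jS.
have [y /Phi_pd pd_y [c c0 gjiE]] := gout j jS.
have ji : j != i by apply: contraNneq jS => ->.
have q_gt0 := pd_y _ (ebasisB_neq0 R ji).
by rewrite -subr_lt0 gjiE oppr_lt0 mulr_gt0.
Qed.
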